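(* Consider instances with two candidates $P,Q$. Let $\mathcal M$ be any deterministic mechanism which selects a winner among $\{P,Q\}$ using only the exact preference strengths of the voters (for each voter $i$: which of $P,Q$ it prefers, and the exact value of its preference strength). Then the worst-case distortion of $\mathcal M$ is at least $\sqrt{2}$; that is, for every $\varepsilon>0$ there is an instance on which the candidate selected by $\mathcal M$ has distortion at least $\sqrt{2}-\varepsilon$.
   Context: Voters $N=\{1,\dots,n\}$ and a finite set of candidates $\mathcal C$ are points of an arbitrary (unknown) metric space $(X,d)$. Voter $i$ prefers candidate $P$ to candidate $Q$ only if $d(i,P)\le d(i,Q)$, and the strength of this preference is $\alpha_i^{PQ}=d(i,Q)/d(i,P)\ge 1$. The social cost of a point $Y\in X$ is $SC(Y)=\sum_{i\in N}d(i,Y)$. If a mechanism selects winner $P_I$ on instance $I=(N,\mathcal C,d)$, the distortion of $P_I$ is $SC(P_I)/\min_{Z\in\mathcal C}SC(Z)$, and the (worst-case) distortion of the mechanism is the supremum of this ratio over all instances. *)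

From Stdlib Require Import Reals List.
Open Scope R_scope.

Record is_metric (X : Type) (d : X -> X -> R) : Prop := {
  metric_nonneg : forall x y, 0 <= d x y;
  metric_eq0    : forall x y, d x y = 0 <-> x = y;
  metric_sym    : forall x y, d x y = d y x;
  metric_tri    : forall x y z, d x z <= d x y + d y z
}.

Definition SC {X : Type} (d : X -> X -> R) (N : list X) (Y : X) : R :=
  fold_right (fun i acc => d i Y + acc) 0 N.

(* Preference strength of a voter at distance a from its preferred candidate
   and distance b >= a from the other one: b / a.  [None] encodes the value
   +infinity (voter located at its preferred candidate, other one farther);
   the degenerate case a = b = 0 gives strength 1. *)
Definition strength (a b : R) : option R :=
  if Req_EM_T a 0 then (if Req_EM_T b 0 then Some 1 else None) else Some (b / a).

(* A tied voter (strength exactly 1) is reported as preferring P; since its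
   strength 1 reveals the tie, the bit carries no further information. *)
Definition report {X : Type} (d : X -> X -> R) (P Q : X) (i : X) : bool * option R :=
  if Rle_dec (d i P) (d i Q) then (true, strength (d i P) (d i Q))
  else (false, strength (d i Q) (d i P)).

(* A deterministic mechanism for two candidates: maps the (ordered) list of
   voter reports to a winner, [true] = P, [false] = Q. *)
Definition mechanism := list (bool * option R) -> bool.

Definition winner {X : Type} (M : mechanism) (d : X -> X -> R) (N : list X) (P Q : X) : X :=
  if M (map (report d P Q) N) then P else Q.

Definition distortion {X : Type} (d : X -> X -> R) (N : list X) (P Q W : X) : R :=
  SC d N W / Rmin (SC d N P) (SC d N Q).

From Stdlib Require Import Reals List Lra.
Import ListNotations.
Open Scope R_scope.

(* Let s = 1 + sqrt 2, the positive root of s^2 = 2 s + 1, and put the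
   candidates at P = 0 and Q = s + 1 on the real line.  Voters at 1 and s^2
   report "P with strength s" and "Q with strength s"; so do voters at -s
   and s.  In the first instance the ratio SC(P)/SC(Q) is (s^2 + 1)/(2 s)
   = sqrt 2, and the second is its mirror image with P and Q exchanged.  A
   mechanism sees the same reports in both instances, hence elects the same
   side, and in one of them that side has distortion exactly sqrt 2. *)

Lemma Rdist_is_metric : is_metric R Rdist.
Proof.
  split.
  - intros x y; apply Rge_le, Rdist_pos.
  - exact Rdist_refl.
  - exact Rdist_sym.
  - intros; apply Rdist_tri.
Qed.

Lemma report_prefers_P {X : Type} (d : X -> X -> R) (P Q i : X) (a b : R) :
  d i P = a -> d i Q = b -> 0 < a <= b -> report d P Q i = (true, Some (b / a)).
Proof.
  intros HP HQ Hab; unfold report, strength; rewrite HP, HQ.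
  destruct (Rle_dec _ _); [|lra].
  destruct (Req_EM_T _ _); [lra|reflexivity].
Qed.

Lemma report_prefers_Q {X : Type} (d : X -> X -> R) (P Q i : X) (a b : R) :
  d i Q = a -> d i P = b -> 0 < a < b -> report d P Q i = (false, Some (b / a)).
Proof.
  intros HQ HP Hab; unfold report, strength; rewrite HQ, HP.
  destruct (Rle_dec _ _); [lra|].
  destruct (Req_EM_T _ _); [lra|reflexivity].
Qed.

Definition silver : R := 1 + sqrt 2.

Lemma silver_gt1 : 1 < silver.
Proof. unfold silver; generalize (sqrt_lt_R0 2); lra. Qed.

Lemma silver_sq : silver * silver = 2 * silver + 1.
Proof. unfold silver; generalize (sqrt_sqrt 2); lra. Qed.

Lemma silver_ratio : (silver * silver + 1) / (2 * silver) = sqrt 2.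
Proof.
  generalize silver_gt1 (sqrt_sqrt 2); intros Hs Hsqrt.
  rewrite silver_sq; field_simplify_eq; [unfold silver in *; nra | lra].
Qed.

Definition silver_profile : list (bool * option R) :=
  [(true, Some silver); (false, Some silver)].

Definition Q_line : R := silver + 1.

Definition voters_near_P : list R := [1; silver * silver].

Definition voters_around_P : list R := [- silver; silver].

Ltac solve_line := unfold Rdist; try split_Rabs; lra.

Lemma reports_near_P :
  map (report Rdist 0 Q_line) voters_near_P = silver_profile.
Proof.
  generalize silver_gt1 silver_sq; intros Hs Hsq.
  unfold voters_near_P, Q_line; simpl.
  rewrite (report_prefers_P _ _ _ _ 1 silver),
    (report_prefers_Q _ _ _ _ silver (silver * silver)) by solve_line.
  replace (silver / 1) with silver by field.
  replace (silver * silver / silver) with silver by (field; lra).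
  reflexivity.
Qed.

Lemma reports_around_P :
  map (report Rdist 0 Q_line) voters_around_P = silver_profile.
Proof.
  generalize silver_gt1 silver_sq; intros Hs Hsq.
  unfold voters_around_P, Q_line; simpl.
  rewrite (report_prefers_P _ _ _ _ silver (silver * silver)),
    (report_prefers_Q _ _ _ _ 1 silver) by solve_line.
  replace (silver / 1) with silver by field.
  replace (silver * silver / silver) with silver by (field; lra).
  reflexivity.
Qed.

Lemma SC_near_P :
  SC Rdist voters_near_P 0 = silver * silver + 1 /\
  SC Rdist voters_near_P Q_line = 2 * silver.
Proof.
  generalize silver_gt1 silver_sq; intros Hs Hsq.
  unfold SC, voters_near_P, Q_line; simpl; split; solve_line.
Qed.

Lemma SC_around_P :
  SC Rdist voters_around_P 0 = 2 * silver /\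
  SC Rdist voters_around_P Q_line = silver * silver + 1.
Proof.
  generalize silver_gt1 silver_sq; intros Hs Hsq.
  unfold SC, voters_around_P, Q_line; simpl; split; solve_line.
Qed.

Theorem mainTheorem1 :
  forall (M : mechanism) (eps : R), 0 < eps ->
  exists (X : Type) (d : X -> X -> R) (N : list X) (P Q : X),
    is_metric X d /\
    0 < Rmin (SC d N P) (SC d N Q) /\
    sqrt 2 - eps <= distortion d N P Q (winner M d N P Q).
Proof.
  intros M eps Heps.
  generalize silver_gt1 silver_ratio; intros Hs Hratio.
  destruct (M silver_profile) eqn:HM.
  - exists R, Rdist, voters_near_P, 0, Q_line.
    destruct SC_near_P as [HSCP HSCQ].
    unfold winner, distortion; rewrite reports_near_P, HM, HSCP, HSCQ.
    rewrite Rmin_right by nra.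
    split; [exact Rdist_is_metric | split; lra].
  - exists R, Rdist, voters_around_P, 0, Q_line.
    destruct SC_around_P as [HSCP HSCQ].
    unfold winner, distortion; rewrite reports_around_P, HM, HSCP, HSCQ.
    rewrite Rmin_left by nra.
    split; [exact Rdist_is_metric | split; lra].
Qed.
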